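(* Let $\varphi$ be a $w^*$-continuous positive linear map on $B(\mathcal H)$ and let $A\in B(\mathcal H)$ be selfadjoint with $\varphi(A)\le A$. Let $A=B+C$ be the unique decomposition with $B=B^*$, $\varphi(B)=B$, and $C\ge0$, $\varphi(C)\le C$, $\varphi^k(C)\to0$ strongly as $k\to\infty$. Then $$\text{SOT-}\lim_{k\to\infty}\frac{\varphi^0(A)+\varphi^1(A)+\cdots+\varphi^{k-1}(A)}{k}=B.$$
   Context: $\varphi^0$ denotes the identity map. *)

From mathcomp Require Import all_boot all_order all_algebra.
From mathcomp Require Import reals complex.
Import GRing.Theory Num.Theory.
Set Implicit Arguments. Unset Strict Implicit. Unset Printing Implicit Defensive.
Local Open Scope ring_scope.
Local Open Scope complex_scope.

Section Hilbert.
Variable R : realType.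
Variable V : lmodType R[i].
(* the inner product, linear in the first argument *)
Variable ip : V -> V -> R[i].

Definition hnorm (x : V) : R[i] := sqrtC (ip x x).

Definition is_hilbert : Prop :=
  [/\ (forall a x y z, ip (a *: x + y) z = a * ip x z + ip y z),
      (forall x y, ip y x = (ip x y)^*),
      (forall x, 0 <= ip x x),
      (forall x, ip x x = 0 -> x = 0) &
      (forall u : nat -> V,
         (forall e : R[i], 0 < e -> exists N, forall m n, (N <= m)%N -> (N <= n)%N ->
              hnorm (u m - u n) < e) ->
         exists l, forall e : R[i], 0 < e -> exists N, forall n, (N <= n)%N ->
              hnorm (u n - l) < e)].

Definition bounded_op (T : V -> V) : Prop :=
  (forall a x y, T (a *: x + y) = a *: T x + T y) /\
  exists M : R[i], forall x, hnorm (T x) <= M * hnorm x.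

Definition selfadjoint (T : V -> V) : Prop := forall x y, ip (T x) y = ip x (T y).

Definition positive_op (T : V -> V) : Prop := forall x, 0 <= ip (T x) x.

Definition op_le (S T : V -> V) : Prop := positive_op (fun x => T x - S x).

Definition sot_conv (T : nat -> V -> V) (T0 : V -> V) : Prop :=
  forall x, forall e : R[i], 0 < e -> exists N, forall k, (N <= k)%N ->
    hnorm (T k x - T0 x) < e.

Definition sq_summable (xs : nat -> V) : Prop :=
  exists M : R[i], forall N, \sum_(n < N) ip (xs n) (xs n) <= M.

Definition series_to (s : nat -> R[i]) (c : R[i]) : Prop :=
  forall e : R[i], 0 < e -> exists N, forall n, (N <= n)%N ->
    `| \sum_(j < n) s j - c | < e.

Definition directed (I : Type) (le : I -> I -> Prop) : Prop :=
  [/\ inhabited I, (forall i, le i i), (forall i j k, le i j -> le j k -> le i k) &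
      (forall i j, exists k, le i k /\ le j k)].

(* convergence of a net (T_i) in B(H) to T0 in the sigma-weak (= weak-star) topology,
   generated by the functionals T |-> sum_n <T x_n, y_n> with (x_n), (y_n)
   square-summable *)
Definition wstar_conv (I : Type) (le : I -> I -> Prop) (T : I -> V -> V)
    (T0 : V -> V) : Prop :=
  forall xs ys : nat -> V, sq_summable xs -> sq_summable ys ->
  forall e : R[i], 0 < e -> exists i0, forall i, le i0 i ->
    forall c, series_to (fun n => ip (T i (xs n) - T0 (xs n)) (ys n)) c ->
      `|c| < e.

(* phi is a map on B(H) (its values off B(H) are irrelevant) *)
Definition maps_BH (phi : (V -> V) -> (V -> V)) : Prop :=
  forall T, bounded_op T -> bounded_op (phi T).

Definition linear_on_BH (phi : (V -> V) -> (V -> V)) : Prop :=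
  forall (a : R[i]) S T, bounded_op S -> bounded_op T ->
    phi (fun x => a *: S x + T x) = (fun x => a *: phi S x + phi T x).

Definition positive_map (phi : (V -> V) -> (V -> V)) : Prop :=
  forall T, bounded_op T -> positive_op T -> positive_op (phi T).

Definition wstar_continuous (phi : (V -> V) -> (V -> V)) : Prop :=
  forall (I : Type) (le : I -> I -> Prop), directed le ->
  forall (T : I -> V -> V) (T0 : V -> V),
    (forall i, bounded_op (T i)) -> bounded_op T0 ->
    wstar_conv le T T0 -> wstar_conv le (fun i => phi (T i)) (phi T0).

Definition cesaro (phi : (V -> V) -> (V -> V)) (A : V -> V) (k : nat) : V -> V :=
  fun x => (k%:R)^-1 *: \sum_(j < k) iter j phi A x.

End Hilbert.

From mathcomp Require Import all_boot all_order all_algebra.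
From mathcomp Require Import reals complex.
From mathcomp Require Import ring.
From Stdlib Require Import FunctionalExtensionality.
Import Order.TTheory GRing.Theory Num.Theory.
Set Implicit Arguments. Unset Strict Implicit. Unset Printing Implicit Defensive.
Local Open Scope ring_scope.
Local Open Scope complex_scope.

(* phi is linear on B(H) and fixes B, so phi^j(A) = B + phi^j(C), and the Cesaro
   means of (phi^j(A)) are B plus those of (phi^j(C)).  At a vector x, the norm
   of the latter is bounded, by the triangle inequality, by the Cesaro means of
   the null sequence ||phi^j(C) x||, and these tend to 0.  Positivity,
   w*-continuity and self-adjointness only serve to produce the decomposition
   A = B + C, which is part of the hypotheses. *)

Section CesaroNull.
Variable R : realType.

Lemma exists_natr_mul_gt (M e : R[i]) :
  0 <= M -> 0 < e -> exists n : nat, M < n%:R * e.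
Proof.
move=> M0 e0.
have /complex_realP [m Em] := ger0_real M0.
have /complex_realP [f Ef] := gtr0_real e0.
have f0 : 0 < f by rewrite -ltcR -Ef.
have m0 : 0 <= m by rewrite -lecR -Em.
exists (Num.bound (m / f)); rewrite Em Ef.
have -> : (Num.bound (m / f))%:R * f%:C = ((Num.bound (m / f))%:R * f)%:C.
  by rewrite rmorphM rmorph_nat.
by rewrite ltcR -ltr_pdivrMr // archi_boundP // divr_ge0 // ltW.
Qed.

Lemma cesaro_mean_null (a : nat -> R[i]) :
  (forall j, 0 <= a j) ->
  (forall e, 0 < e -> exists N, forall k, (N <= k)%N -> a k < e) ->
  forall e, 0 < e -> exists N, forall k, (N <= k)%N ->
    (k%:R)^-1 * \sum_(j < k) a j < e.
Proof.
move=> a_ge0 a_null e e0.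
set e2 := e / 2%:R.
have e20 : 0 < e2 by rewrite divr_gt0 // ltr0n.
have [N aN] := a_null e2 e20.
set M := \sum_(j < N) a j.
have [n Mn] : exists n : nat, M < n%:R * e2.
  by apply: exists_natr_mul_gt => //; apply: sumr_ge0.
exists (N + n).+1 => k Nnk.
have Nk : (N <= k)%N by apply: leq_trans (leq_addr _ _) (ltnW Nnk).
have k0 : 0 < (k%:R : R[i]) by rewrite ltr0n (leq_trans _ Nnk).
have tail_le : \sum_(N <= j < k) a j <= e2 *+ k.
  apply: (@le_trans _ _ (\sum_(N <= j < k) e2)).
    by apply: ler_sum_nat => j /andP [Nj _]; apply/ltW/aN.
  by rewrite sumr_const_nat -{2}(subnK Nk) mulrnDr lerDl mulrn_wge0 // ltW.
rewrite -(big_mkord xpredT) (big_cat_nat (leq0n N) Nk) /= big_mkord -/M.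
apply: (@le_lt_trans _ _ ((k%:R)^-1 * (M + e2 *+ k))).
  by apply: ler_wpM2l; rewrite ?invr_ge0 ?ler0n // lerD2l.
rewrite mulrDr -[e2 *+ k]mulr_natl mulrA mulVf ?gt_eqF // mul1r [e]splitr -/e2.
rewrite ltrD2r ltr_pdivrMl // mulrC (lt_le_trans Mn) // [e2 * _]mulrC.
apply: ler_wpM2r; first exact: ltW.
by rewrite ler_nat (leq_trans (leq_addl _ _) (ltnW Nnk)).
Qed.

End CesaroNull.

Section InnerProduct.
Variable R : realType.
Variable V : lmodType R[i].
Variable ip : V -> V -> R[i].
Hypothesis ipl : forall a x y z, ip (a *: x + y) z = a * ip x z + ip y z.
Hypothesis ipc : forall x y, ip y x = (ip x y)^*.
Hypothesis ip_ge0 : forall x, 0 <= ip x x.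
Hypothesis ip_eq0 : forall x, ip x x = 0 -> x = 0.

Lemma ipDl x y z : ip (x + y) z = ip x z + ip y z.
Proof. by rewrite -(scale1r x) ipl mul1r scale1r. Qed.

Lemma ip0l z : ip 0 z = 0.
Proof. by have := ipDl 0 0 z; rewrite addr0 => /esym/eqP; rewrite -subr_eq0 addrK => /eqP. Qed.

Lemma ipZl a x z : ip (a *: x) z = a * ip x z.
Proof. by rewrite -(addr0 (a *: x)) ipl ip0l addr0. Qed.

Lemma ipDr x y z : ip z (x + y) = ip z x + ip z y.
Proof. by rewrite ipc ipDl rmorphD /= -!ipc. Qed.

Lemma ipZr a x z : ip z (a *: x) = conjc a * ip z x.
Proof. by rewrite ipc ipZl rmorphM /= -ipc. Qed.

Lemma ip0r z : ip z 0 = 0.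
Proof. by rewrite ipc ip0l conjc0. Qed.

Lemma ip_self_conj x : (ip x x)^* = ip x x.
Proof. by have /complex_realP [r ->] := ger0_real (ip_ge0 x); rewrite conjc_real. Qed.

Lemma ip_Cauchy_Schwarz x y : `|ip x y| ^+ 2 <= ip x x * ip y y.
Proof.
have [qy0 | qy_neq0] := eqVneq (ip y y) 0.
  by rewrite (ip_eq0 qy0) !ip0r normr0 expr0n mulr0.
have qy_gt0 : 0 < ip y y by rewrite lt0r qy_neq0 ip_ge0.
(* expand 0 <= <qy x - c y, qy x - c y> with qy = <y, y> and c = <x, y> *)
have := ip_ge0 (ip y y *: x + (- ip x y) *: y).
rewrite !ipDl !ipDr !ipZl !ipZr ip_self_conj (ipc x y) rmorphN /=.
set c := ip x y; set qx := ip x x; set qy := ip y y.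
have -> : qy * (qy * qx) + qy * (- c^* * c) + (- c * (qy * c^*) + - c * (- c^* * qy))
          = qy * (qx * qy - c * c^*) by ring.
by rewrite pmulr_rge0 // subr_ge0 sqr_normc.
Qed.

Lemma hnorm_ge0 x : 0 <= hnorm ip x.
Proof. by rewrite /hnorm sqrtC_ge0. Qed.

Lemma hnorm0 : hnorm ip 0 = 0.
Proof. by rewrite /hnorm ip0l sqrtC0. Qed.

Lemma hnormZ a x : hnorm ip (a *: x) = `|a| * hnorm ip x.
Proof.
rewrite /hnorm ipZl ipZr mulrA -sqr_normc sqrtCM ?nnegrE ?exprn_ge0 ?ip_ge0 //.
by rewrite sqrCK.
Qed.

Lemma hnormD x y : hnorm ip (x + y) <= hnorm ip x + hnorm ip y.
Proof.
rewrite /hnorm; set sx := sqrtC (ip x x); set sy := sqrtC (ip y y).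
have sx0 : 0 <= sx by rewrite sqrtC_ge0.
have sy0 : 0 <= sy by rewrite sqrtC_ge0.
rewrite -(sqrCK (addr_ge0 sx0 sy0)) ler_sqrtC ?nnegrE ?ip_ge0 ?exprn_ge0 ?addr_ge0 //.
rewrite ipDl !ipDr (ipc x y) sqrrD /sx /sy !sqrtCK -/sx -/sy.
set c := ip x y.
have re_le : c + c^* <= sx * sy *+ 2.
  rewrite addcJ -[sx * sy *+ 2]mulr_natl; apply: ler_wpM2l; first exact: ler0n.
  apply: (le_trans (y := `|c|)).
    by apply: le_trans (normc_ge_Re c); rewrite lecR real_ler_norm ?num_real.
  rewrite -(ler_pXn2r (n := 2)) ?nnegrE ?mulr_ge0 //.
  by rewrite exprMn /sx /sy !sqrtCK ip_Cauchy_Schwarz.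
have -> : ip x x + c + (c^* + ip y y) = ip x x + ip y y + (c + c^*) by ring.
have -> : ip x x + sx * sy *+ 2 + ip y y = ip x x + ip y y + sx * sy *+ 2 by ring.
by rewrite lerD2l.
Qed.

Lemma hnorm_sum n (u : nat -> V) :
  hnorm ip (\sum_(j < n) u j) <= \sum_(j < n) hnorm ip (u j).
Proof.
elim: n => [|n IHn]; first by rewrite !big_ord0 hnorm0.
by rewrite !big_ord_recr /= (le_trans (hnormD _ _)) // lerD2r.
Qed.

End InnerProduct.

Section IteratedMap.
Variable R : realType.
Variable V : lmodType R[i].
Variable ip : V -> V -> R[i].
Variable phi : (V -> V) -> (V -> V).
Hypothesis phi_BH : maps_BH ip phi.
Hypothesis phi_lin : linear_on_BH ip phi.

Lemma iter_bounded_op j T : bounded_op ip T -> bounded_op ip (iter j phi T).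
Proof. by move=> bT; elim: j => [|j IHj] //=; apply: phi_BH. Qed.

Lemma iter_add_fixed (A B C : V -> V) :
  bounded_op ip B -> bounded_op ip C -> (forall x, A x = B x + C x) ->
  phi B = B -> forall j, iter j phi A = (fun x => B x + iter j phi C x).
Proof.
move=> bB bC defA phiB; elim=> [|j IHj] /=; first exact: functional_extensionality.
rewrite IHj.
have -> : (fun x => B x + iter j phi C x) = (fun x => 1 *: B x + iter j phi C x).
  by apply: functional_extensionality => x; rewrite scale1r.
rewrite phi_lin ?phiB //; last exact: iter_bounded_op.
by apply: functional_extensionality => x; rewrite scale1r.
Qed.

Lemma cesaro_add_fixed (A B C : V -> V) :
  bounded_op ip B -> bounded_op ip C -> (forall x, A x = B x + C x) ->
  phi B = B -> forall k x, (0 < k)%N ->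
  cesaro phi A k x - B x = (k%:R)^-1 *: \sum_(j < k) iter j phi C x.
Proof.
move=> bB bC defA phiB k x k0; rewrite /cesaro.
under eq_bigr do rewrite (iter_add_fixed bB bC defA phiB).
rewrite big_split /= sumr_const card_ord scalerDr -scalerMnr scalerMnl.
by rewrite -mulr_natr mulVf ?pnatr_eq0 -?lt0n // scale1r addrC addKr.
Qed.

End IteratedMap.

Theorem theorem3p2 (R : realType) (V : lmodType R[i]) (ip : V -> V -> R[i])
    (phi : (V -> V) -> (V -> V)) (A B C : V -> V) :
  is_hilbert ip ->
  maps_BH ip phi -> linear_on_BH ip phi -> positive_map ip phi ->
  wstar_continuous ip phi ->
  bounded_op ip A -> selfadjoint ip A -> op_le ip (phi A) A ->
  bounded_op ip B -> bounded_op ip C ->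
  (forall x, A x = B x + C x) ->
  selfadjoint ip B -> phi B = B ->
  positive_op ip C -> op_le ip (phi C) C ->
  sot_conv ip (fun k => iter k phi C) (fun _ => 0) ->
  sot_conv ip (cesaro phi A) B.
Proof.
move=> [ipl ipc ip_ge0 ip_eq0 _] phi_BH phi_lin _ _ _ _ _ bB bC defA _ phiB _ _
  iterC_null x e e0.
have [N meanN] : exists N, forall k, (N <= k)%N ->
    (k%:R)^-1 * \sum_(j < k) hnorm ip (iter j phi C x) < e.
  apply: (@cesaro_mean_null R (fun j => hnorm ip (iter j phi C x))) e0 => [j|e' e'0].
    exact: hnorm_ge0.
  have [N CN] := iterC_null x e' e'0.
  by exists N => k Nk; have := CN k Nk; rewrite subr0.
exists N.+1 => k Nk.
rewrite (cesaro_add_fixed phi_BH phi_lin bB bC defA phiB) ?(leq_trans _ Nk) //.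
rewrite hnormZ // ger0_norm ?invr_ge0 ?ler0n //.
apply: le_lt_trans (meanN k (ltnW Nk)).
rewrite ler_pM2l ?invr_gt0 ?ltr0n ?(leq_trans _ Nk) //.
exact: (hnorm_sum ipl ipc ip_ge0 ip_eq0 k (fun j => iter j phi C x)).
Qed.
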